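(* Let $\delta_B,\delta_R\ge 1$ be integers, and for $\lambda\in\mathbb C$ let $\mu^\pm(\lambda)$ be the eigenvalues of the matrix $T_0(\lambda)$ defined in the context, i.e. \[\mu^\pm(\lambda)=\tfrac12\operatorname{tr}T_0(\lambda)\pm\sqrt{\tfrac14(\operatorname{tr}T_0(\lambda))^2-\tfrac{1}{\delta_B\delta_R}}.\] Then, as $\lambda\to-\infty$ along the real axis, \[\lim_{\lambda\to-\infty}e^{-2|\operatorname{Im}\sqrt\lambda|}\mu^+(\lambda)=\frac{\delta_R+1}{2\delta_R}\cdot\frac{\delta_B+1}{2\delta_B},\qquad \lim_{\lambda\to-\infty}e^{2|\operatorname{Im}\sqrt\lambda|}\mu^-(\lambda)=\frac{2}{\delta_R+1}\cdot\frac{2}{\delta_B+1}.\]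
   Context: Write $\omega=\sqrt\lambda$ and define the entire functions of $\lambda$: $c(\lambda)=\cos\omega$, $c'(\lambda)=-\omega\sin\omega$, $s(\lambda)=\sin\omega/\omega$, $s'(\lambda)=\cos\omega$. Let $M_0(\lambda)=\begin{pmatrix}c&s\\ c'&s'\end{pmatrix}$, $J_B=\begin{pmatrix}1&0\\0&1/\delta_B\end{pmatrix}$, $J_R=\begin{pmatrix}1&0\\0&1/\delta_R\end{pmatrix}$, and $T_0(\lambda)=J_RM_0(\lambda)J_BM_0(\lambda)$ (the transition matrix propagating initial data $(y,y')$ over two consecutive edges of the biregular tree with degrees $\delta_B+1$, $\delta_R+1$). Then $\det T_0(\lambda)=1/(\delta_B\delta_R)$ and $\operatorname{tr}T_0(\lambda)=\cos^2\omega\,(1+\frac{1}{\delta_B\delta_R})-\sin^2\omega\,(\frac1{\delta_R}+\frac1{\delta_B})$. For real $\lambda<0$ this trace is real and, for $|\lambda|$ large, larger than $2/\sqrt{\delta_B\delta_R}$, so $\mu^\pm(\lambda)$ are real with the nonnegative square root taken. *)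

From Stdlib Require Import Reals.
From Coquelicot Require Import Coquelicot.
Open Scope R_scope.

Record mat2 := Mat2 { m11 : R; m12 : R; m21 : R; m22 : R }.

Definition mmul (A B : mat2) : mat2 :=
  Mat2 (m11 A * m11 B + m12 A * m21 B) (m11 A * m12 B + m12 A * m22 B)
       (m21 A * m11 B + m22 A * m21 B) (m21 A * m12 B + m22 A * m22 B).

Definition mtr (A : mat2) : R := m11 A + m22 A.
Definition mdet (A : mat2) : R := m11 A * m22 A - m12 A * m21 A.

(* For real lambda < 0 we have omega = sqrt(lambda) = i t with t = sqrt(-lambda) > 0,
   so that (as entire functions of lambda, evaluated at lambda):
     c  = cos omega          = cosh t
     c' = - omega sin omega  = t sinh t
     s  = sin omega / omega  = sinh t / t
     s' = cos omega          = cosh t .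
   These definitions are only meaningful (and only used) for lambda < 0. *)
Definition tneg (lam : R) : R := sqrt (- lam).

Definition M0 (lam : R) : mat2 :=
  let t := tneg lam in
  Mat2 (cosh t) (sinh t / t) (t * sinh t) (cosh t).

Definition Jd (d : nat) : mat2 := Mat2 1 0 0 (/ INR d).

Definition T0 (dB dR : nat) (lam : R) : mat2 :=
  mmul (Jd dR) (mmul (M0 lam) (mmul (Jd dB) (M0 lam))).

Definition mu_plus (dB dR : nat) (lam : R) : R :=
  mtr (T0 dB dR lam) / 2
  + sqrt ((mtr (T0 dB dR lam)) ^ 2 / 4 - / (INR dB * INR dR)).

Definition mu_minus (dB dR : nat) (lam : R) : R :=
  mtr (T0 dB dR lam) / 2
  - sqrt ((mtr (T0 dB dR lam)) ^ 2 / 4 - / (INR dB * INR dR)).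

(* |Im sqrt(lambda)| for real lambda < 0 *)
Definition abs_im_sqrt (lam : R) : R := sqrt (- lam).

(** With [t = sqrt (- lam)] and [u = exp (-2 t)], the identity
    [cosh^2 = 1 + sinh^2] gives [tr T0 = 1 + ab + (1 + a)(1 + b) sinh^2 t]
    (where [a = 1/dB], [b = 1/dR]), and [u sinh^2 t = (1 - u)^2 / 4]. Since the
    larger eigenvalue is positively homogeneous in [(tr, det)] with weights
    [(1, 2)], [u mu+] is a function of [u] alone which is continuous at [u = 0]
    with value [(1 + a)(1 + b)/4]; as [u -> 0] when [lam -> -oo], this is the
    first limit. The second follows from [mu+ mu- = det T0 = ab]. *)

From Stdlib Require Import Reals Lra Lia.
From Coquelicot Require Import Coquelicot.
Open Scope R_scope.

Definition eig_plus (tr d : R) : R := tr / 2 + sqrt (tr ^ 2 / 4 - d).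
Definition eig_minus (tr d : R) : R := tr / 2 - sqrt (tr ^ 2 / 4 - d).

Lemma eig_plus_scale (u tr d : R) :
  0 < u -> u * eig_plus tr d = eig_plus (u * tr) (u ^ 2 * d).
Proof.
  intros Hu; unfold eig_plus.
  replace ((u * tr) ^ 2 / 4 - u ^ 2 * d) with (Rsqr u * (tr ^ 2 / 4 - d))
    by (unfold Rsqr; field).
  destruct (Rle_or_lt 0 (tr ^ 2 / 4 - d)) as [Hdisc | Hdisc].
  - rewrite sqrt_mult_alt, sqrt_Rsqr by (try apply Rle_0_sqr; lra); field.
  - assert (0 < Rsqr u) by (apply Rlt_0_sqr; lra).
    rewrite !sqrt_neg_0 by nra; field.
Qed.

Lemma eig_plus_mul_minus (tr d : R) :
  d <= tr ^ 2 / 4 -> eig_plus tr d * eig_minus tr d = d.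
Proof.
  intros Hdisc; unfold eig_plus, eig_minus.
  assert (Hs := sqrt_sqrt (tr ^ 2 / 4 - d) ltac:(lra)).
  nra.
Qed.

Lemma eig_plus_pos (tr d : R) : 0 < tr -> 0 < eig_plus tr d.
Proof.
  intros Htr; unfold eig_plus.
  assert (Hs := sqrt_pos (tr ^ 2 / 4 - d)); lra.
Qed.

Lemma eig_plus_0 (tr : R) : 0 <= tr -> eig_plus tr 0 = tr.
Proof.
  intros Htr; unfold eig_plus.
  replace (tr ^ 2 / 4 - 0) with (Rsqr (tr / 2)) by (unfold Rsqr; field).
  rewrite sqrt_Rsqr by lra; field.
Qed.

Lemma cosh_sq (t : R) : cosh t ^ 2 = 1 + sinh t ^ 2.
Proof.
  unfold cosh, sinh; rewrite exp_Ropp.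
  assert (He := exp_pos t); field; lra.
Qed.

Lemma exp_m2_mul_sinh_sq (t : R) : 4 * (exp (-2 * t) * sinh t ^ 2) = (1 - exp (-2 * t)) ^ 2.
Proof.
  replace (-2 * t) with (- (t + t)) by ring.
  unfold sinh; rewrite !exp_Ropp, exp_plus.
  assert (He := exp_pos t); field; lra.
Qed.

Lemma mtr_T0 (dB dR : nat) (lam : R) : lam < 0 ->
  mtr (T0 dB dR lam)
  = 1 + / INR dB * / INR dR + (1 + / INR dB) * (1 + / INR dR) * sinh (tneg lam) ^ 2.
Proof.
  intros Hlam.
  assert (Ht : 0 < tneg lam) by (apply sqrt_lt_R0; lra).
  transitivity ((1 + / INR dB * / INR dR) * cosh (tneg lam) ^ 2
                + (/ INR dB + / INR dR) * sinh (tneg lam) ^ 2).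
  - unfold mtr, T0, mmul, M0, Jd; simpl.
    set (a := / INR dB); set (b := / INR dR); field; lra.
  - rewrite cosh_sq; ring.
Qed.

(* [exp (-2 t) tr T0] as a function of [u = exp (-2 t)], for [a = 1/dB], [b = 1/dR]. *)
Definition scaled_trace (a b u : R) : R :=
  u * (1 + a * b) + (1 + a) * (1 + b) * (1 - u) ^ 2 / 4.

Definition decay (lam : R) : R := exp (- 2 * abs_im_sqrt lam).

Lemma exp_mu_plus (dB dR : nat) (lam : R) : lam < 0 ->
  exp (- 2 * abs_im_sqrt lam) * mu_plus dB dR lam
  = eig_plus (scaled_trace (/ INR dB) (/ INR dR) (decay lam))
             (/ INR dB * / INR dR * decay lam ^ 2).
Proof.
  intros Hlam.
  change (mu_plus dB dR lam) with (eig_plus (mtr (T0 dB dR lam)) (/ (INR dB * INR dR))).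
  rewrite eig_plus_scale, mtr_T0, Rinv_mult by (apply exp_pos || exact Hlam).
  unfold scaled_trace, decay, abs_im_sqrt, tneg; rewrite <- exp_m2_mul_sinh_sq.
  set (a := / INR dB); set (b := / INR dR).
  f_equal; field.
Qed.

Lemma is_lim_decay : is_lim decay m_infty 0.
Proof.
  apply (is_lim_comp exp (fun lam => -2 * sqrt (- lam)) m_infty 0 m_infty).
  - exact is_lim_exp_m.
  - replace m_infty with (Rbar_mult (-2) p_infty) at 2
      by (simpl; destruct (Rle_dec 0 (-2)); [exfalso; lra | reflexivity]).
    apply is_lim_scal_l, is_lim_sqrt_p.
    apply (is_lim_opp (fun lam => lam) m_infty m_infty), is_lim_id.
  - exists 0; intros; discriminate.
Qed.

Lemma continuity_pt_eig_plus_scaled (a b : R) :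
  continuity_pt (fun u => eig_plus (scaled_trace a b u) (a * b * u ^ 2)) 0.
Proof.
  assert (Htr : forall u, continuity_pt (scaled_trace a b) u)
    by (intro u; unfold scaled_trace; reg).
  unfold eig_plus.
  apply continuity_pt_plus.
  - apply continuity_pt_div; [apply Htr | apply continuity_pt_const; intros ? ?; reflexivity | lra].
  - apply (continuity_pt_comp (fun u => scaled_trace a b u ^ 2 / 4 - a * b * u ^ 2) sqrt).
    + reg; apply Htr.
    + apply continuity_pt_sqrt; nra.
Qed.

Lemma is_lim_eig_plus_scaled (a b : R) : 0 <= a -> 0 <= b ->
  is_lim (fun lam => eig_plus (scaled_trace a b (decay lam)) (a * b * decay lam ^ 2))
    m_infty ((1 + a) * (1 + b) / 4).
Proof.
  intros Ha Hb.
  replace ((1 + a) * (1 + b) / 4) with (eig_plus (scaled_trace a b 0) (a * b * 0 ^ 2)).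
  2: { replace (a * b * 0 ^ 2) with 0 by ring.
       unfold scaled_trace; rewrite eig_plus_0 by nra; field. }
  eapply (filterlim_comp _ _ _ decay (fun u => eig_plus (scaled_trace a b u) (a * b * u ^ 2))).
  - exact is_lim_decay.
  - apply continuity_pt_filterlim, continuity_pt_eig_plus_scaled.
Qed.

Lemma exp_mu_minus (dB dR : nat) (lam : R) : (1 <= dB)%nat -> (1 <= dR)%nat -> lam < 0 ->
  exp (2 * abs_im_sqrt lam) * mu_minus dB dR lam
  = / INR dB * / INR dR / (exp (- 2 * abs_im_sqrt lam) * mu_plus dB dR lam).
Proof.
  intros HB HR Hlam.
  assert (Ha : 0 < / INR dB) by (apply Rinv_0_lt_compat, lt_0_INR; lia).
  assert (Hb : 0 < / INR dR) by (apply Rinv_0_lt_compat, lt_0_INR; lia).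
  change (mu_plus dB dR lam) with (eig_plus (mtr (T0 dB dR lam)) (/ (INR dB * INR dR))).
  change (mu_minus dB dR lam) with (eig_minus (mtr (T0 dB dR lam)) (/ (INR dB * INR dR))).
  rewrite Rinv_mult, (mtr_T0 dB dR lam Hlam).
  set (a := / INR dB) in *; set (b := / INR dR) in *.
  set (tr := 1 + a * b + (1 + a) * (1 + b) * sinh (tneg lam) ^ 2).
  assert (Htr : 1 + a * b <= tr).
  { assert (0 <= (1 + a) * (1 + b) * sinh (tneg lam) ^ 2)
      by (apply Rmult_le_pos; [nra | apply pow2_ge_0]).
    unfold tr; lra. }
  (* [tr^2 / 4 - ab >= ((1 + ab)^2 - 4 ab) / 4 = (1 - ab)^2 / 4]: the eigenvalues are real *)
  assert (Hdisc : a * b <= tr ^ 2 / 4).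
  { assert (0 < a * b) by nra.
    assert ((1 + a * b) ^ 2 <= tr ^ 2) by (apply pow_incr; lra).
    assert (0 <= (1 - a * b) ^ 2) by apply pow2_ge_0.
    nra. }
  assert (Hprod := eig_plus_mul_minus tr (a * b) Hdisc).
  assert (Hpos := eig_plus_pos tr (a * b) ltac:(nra)).
  assert (Hexp : exp (2 * abs_im_sqrt lam) = / exp (- 2 * abs_im_sqrt lam)).
  { rewrite <- exp_Ropp; f_equal; ring. }
  assert (He := exp_pos (- 2 * abs_im_sqrt lam)).
  set (p := eig_plus tr (a * b)) in *; set (m := eig_minus tr (a * b)) in *.
  rewrite Hexp, <- Hprod; field; lra.
Qed.

Lemma is_lim_exp_mu_plus (dB dR : nat) : (1 <= dB)%nat -> (1 <= dR)%nat ->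
  is_lim (fun lam => exp (- 2 * abs_im_sqrt lam) * mu_plus dB dR lam) m_infty
    ((1 + / INR dB) * (1 + / INR dR) / 4).
Proof.
  intros HB HR.
  eapply is_lim_ext_loc.
  - exists 0; intros lam Hlam; symmetry; exact (exp_mu_plus dB dR lam Hlam).
  - apply is_lim_eig_plus_scaled; left; apply Rinv_0_lt_compat, lt_0_INR; lia.
Qed.

Theorem lemma4p1 (dB dR : nat) (hB : (1 <= dB)%nat) (hR : (1 <= dR)%nat) :
  is_lim (fun lam => exp (- 2 * abs_im_sqrt lam) * mu_plus dB dR lam) m_infty
    ((INR dR + 1) / (2 * INR dR) * ((INR dB + 1) / (2 * INR dB)))
  /\
  is_lim (fun lam => exp (2 * abs_im_sqrt lam) * mu_minus dB dR lam) m_infty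
    (2 / (INR dR + 1) * (2 / (INR dB + 1))).
Proof.
  assert (HB : 0 < INR dB) by (apply lt_0_INR; lia).
  assert (HR : 0 < INR dR) by (apply lt_0_INR; lia).
  assert (Hplus := is_lim_exp_mu_plus dB dR hB hR).
  split.
  - replace ((INR dR + 1) / (2 * INR dR) * ((INR dB + 1) / (2 * INR dB)))
      with ((1 + / INR dB) * (1 + / INR dR) / 4) by (field; lra).
    exact Hplus.
  - eapply is_lim_ext_loc.
    + exists 0; intros lam Hlam; symmetry; exact (exp_mu_minus dB dR lam hB hR Hlam).
    + replace (Finite (2 / (INR dR + 1) * (2 / (INR dB + 1))))
        with (Rbar_mult (/ INR dB * / INR dR) (Rbar_inv ((1 + / INR dB) * (1 + / INR dR) / 4)))
        by (simpl; f_equal; field; lra).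
      apply is_lim_scal_l, is_lim_inv; [exact Hplus |].
      intros Heq; injection Heq.
      assert (0 < / INR dB) by (apply Rinv_0_lt_compat; lra).
      assert (0 < / INR dR) by (apply Rinv_0_lt_compat; lra).
      nra.
Qed.
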